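(* Let $k \geq 1$. Every $k$-degenerate graph $G$ on $n$ vertices is $(k,b)$-colorable for every integer $b \geq 4k\sqrt{k+1}\sqrt{n}$. In other words, $\mathrm{ex}_k(\mathcal{D}_k)(n) \leq 4k\sqrt{k+1}\sqrt{n}$, where $\mathcal{D}_k$ is the class of $k$-degenerate graphs.
   Context: A graph is $k$-degenerate if every subgraph has a vertex of degree at most $k$. A set of vertices $X$ is $2$-independent if any two distinct vertices of $X$ are at distance at least $3$. A graph $G$ is $(a,b)$-colorable if $V(G)$ can be partitioned into $a$ independent sets and $b$ $2$-independent sets (some parts may be empty). For a class $\mathcal{C}$ of graphs, $\mathrm{ex}_a(\mathcal{C})(n)$ denotes the smallest integer $c$ such that every graph of order $n$ in $\mathcal{C}$ is $(a,c)$-colorable. *)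

From mathcomp Require Import all_boot.
From Stdlib Require Import Reals.
Set Implicit Arguments. Unset Strict Implicit. Unset Printing Implicit Defensive.

Definition simple_graph (T : finType) (e : rel T) : Prop :=
  symmetric e /\ irreflexive e.

(* k-degenerate: every (nonempty) induced subgraph has a vertex of degree <= k.
   (Degree of a vertex in the subgraph is its number of neighbours inside S;
   it suffices to consider induced subgraphs since degrees only shrink.) *)
Definition degenerate (T : finType) (e : rel T) (k : nat) : Prop :=
  forall S : {set T}, S != set0 ->
    exists2 v, v \in S & #|[set u in S | e v u]| <= k.

Definition independent (T : finType) (e : rel T) (X : {set T}) : Prop :=
  forall x y, x \in X -> y \in X -> ~~ e x y.

(* 2-independent: distinct vertices are at distance >= 3, i.e. they are
   neither adjacent nor have a common neighbour. *)
Definition two_independent (T : finType) (e : rel T) (X : {set T}) : Prop :=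
  forall x y, x \in X -> y \in X -> x != y ->
    ~~ e x y /\ (forall z, ~~ (e x z && e z y)).

(* (a,b)-colorable: V partitioned into a independent sets and b
   2-independent sets (parts may be empty); colour classes 0..a-1 are
   independent, colour classes a..a+b-1 are 2-independent. *)
Definition ab_colorable (T : finType) (e : rel T) (a b : nat) : Prop :=
  exists c : T -> 'I_(a + b),
    (forall i : 'I_(a + b), i < a -> independent e [set x | c x == i]) /\
    (forall i : 'I_(a + b), a <= i -> two_independent e [set x | c x == i]).

(* Fix a degeneracy order, so every vertex has at most k later neighbours, and
   let t = floor(sqrt n). Call a vertex heavy if it has at least t earlier
   neighbours; double counting bounds their number h by k n / t.
   Vertices none of whose later neighbours is heavy, together with the heavy
   vertices, form a set X whose square is (h + O(k^2 + k t))-degenerate, so X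
   is covered by at most b 2-independent sets. Every vertex outside X has a
   heavy later neighbour, which lies in X; hence G - X is (k-1)-degenerate and
   is properly coloured with k colours. *)
From mathcomp Require Import all_boot.
From Stdlib Require Import Reals.
From mathcomp Require Import zify.
From Stdlib Require Import Lra Psatz.
Set Implicit Arguments. Unset Strict Implicit. Unset Printing Implicit Defensive.

Lemma card_bigcup_le (T I : finType) (A : {set I}) (F : I -> {set T}) :
  #|\bigcup_(z in A) F z| <= \sum_(z in A) #|F z|.
Proof.
elim/big_rec2: _ => [|i n X _ h]; first by rewrite cards0.
by apply: leq_trans (leq_card_setU _ _) _; rewrite leq_add2l.
Qed.

Lemma sum_card_rel_sym (T : finType) (R : rel T) :
  \sum_v #|[set u | R u v]| = \sum_v #|[set u | R v u]|.
Proof.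
have cardE (P : pred T) : #|[set u | P u]| = \sum_u P u.
  by rewrite -sum1dep_card big_mkcond; apply: eq_bigr => u _; case: (P u).
by under eq_bigr do rewrite cardE; under [RHS]eq_bigr do rewrite cardE;
   rewrite exchange_big.
Qed.

Lemma ex_min_rank (T : finType) (S : {set T}) (r : T -> nat) :
  S != set0 -> exists2 v, v \in S & forall u, u \in S -> r v <= r u.
Proof. by case/set0Pn => x xS; case: (arg_minnP r xS) => v; exists v. Qed.

Lemma degenerate_coloring (T : finType) (R : rel T) (d : nat) (A : {set T}) :
  irreflexive R ->
  (forall S : {set T}, S \subset A -> S != set0 ->
     exists2 v, v \in S & #|[set u in S | R v u || R u v]| <= d) ->
  exists c : T -> 'I_d.+1, {in A &, forall x y, R x y -> c x != c y}.
Proof.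
move=> R_irr; move: {2}#|A| (leqnn #|A|) => m; elim: m A => [|m IH] A A_le A_deg.
  move: A_le; rewrite leqn0 cards_eq0 => /eqP ->.
  by exists (fun _ => ord0) => x y; rewrite in_set0.
have [/eqP -> | A_n0] := boolP (A == set0).
  by exists (fun _ => ord0) => x y; rewrite in_set0.
have [v vA v_deg] := A_deg A (subxx A) A_n0.
have [c c_ok] : exists c : T -> 'I_d.+1,
    {in A :\ v &, forall x y, R x y -> c x != c y}.
  apply: IH => [|S sS]; first by move: A_le; rewrite (cardsD1 v A) vA.
  by apply: A_deg; apply: subset_trans sS (subsetDl _ _).
pose N := [set u in A :\ v | R v u || R u v].
have [i iN] : exists i, i \notin c @: N.
  have N_le : #|c @: N| <= d.
    apply: leq_trans (leq_imset_card _ _) (leq_trans _ v_deg).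
    by apply: subset_leq_card; apply/subsetP => u; rewrite !inE => /andP[/andP[_ ->] ->].
  have := cardsC (c @: N); rewrite card_ord => cardNC.
  have /set0Pn[i] : ~: (c @: N) != set0 by rewrite -card_gt0; lia.
  by rewrite inE; exists i.
exists (fun x => if x == v then i else c x) => x y.
case: (eqVneq x v) => [-> | xv]; case: (eqVneq y v) => [-> | yv] xA yA Rxy.
- by rewrite R_irr in Rxy.
- by apply: contraNneq iN => ->; apply: imset_f; rewrite !inE yv yA Rxy.
- by rewrite eq_sym; apply: contraNneq iN => ->; apply: imset_f;
     rewrite !inE xv xA Rxy orbT.
- by apply: c_ok; rewrite // !inE ?xv ?yv.
Qed.

Definition out_nbrs (T : finType) (e : rel T) (r : T -> nat) (v : T) : {set T} :=
  [set u | e v u & r v < r u].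

Definition in_nbrs (T : finType) (e : rel T) (r : T -> nat) (v : T) : {set T} :=
  [set u | e u v & r u < r v].

Lemma degeneracy_order (T : finType) (e : rel T) k : degenerate e k ->
  exists r : T -> nat, injective r /\ forall v, #|out_nbrs e r v| <= k.
Proof.
move=> e_deg.
suff [r [r_inj r_out]] : exists r : T -> nat, injective r /\
    forall v, #|[set u in [set: T] | e v u & r v < r u]| <= k.
  by exists r; split=> // v; apply: leq_trans (r_out v); apply: subset_leq_card;
     apply/subsetP => u; rewrite !inE.
move: {2}#|[set: T]| (leqnn #|[set: T]|) => m; elim: m [set: T] => [|m IH] S S_le.
  move: S_le; rewrite leqn0 cards_eq0 => /eqP ->.
  exists (fun x => nat_of_ord (enum_rank x)); split=> [x y /val_inj/enum_rank_inj //|v].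
  apply: leq_trans (_ : _ <= 0) (leq0n k); rewrite leqn0 cards_eq0.
  by apply/eqP/setP => u; rewrite !inE.
have [/eqP -> | S_n0] := boolP (S == set0).
  by apply: (IH set0); rewrite cards0.
have [v vS v_deg] := e_deg S S_n0.
have [r [r_inj r_out]] : exists r : T -> nat, injective r /\
    forall w, #|[set u in S :\ v | e w u & r w < r u]| <= k.
  by apply: IH; move: S_le; rewrite (cardsD1 v S) vS.
exists (fun x => if x == v then 0 else (r x).+1); split.
  by move=> x y; case: (eqVneq x v) => [->|_]; case: (eqVneq y v) => [->|_] //= [/r_inj].
move=> w; case: (eqVneq w v) => [->|wv].
  apply: leq_trans v_deg; apply: subset_leq_card; apply/subsetP => u.
  by rewrite !inE => /andP[-> /andP[-> _]].
apply: leq_trans (r_out w); apply: subset_leq_card; apply/subsetP => u; rewrite !inE.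
by case: (eqVneq u v) => [-> | _] //=; rewrite ltn0 !andbF.
Qed.

Definition within2 (T : finType) (e : rel T) : rel T :=
  fun x y => (x != y) && (e x y || [exists z, e x z && e z y]).

Lemma within2_irr (T : finType) (e : rel T) : irreflexive (within2 e).
Proof. by move=> x; rewrite /within2 eqxx. Qed.

Lemma ab_colorable_split (T : finType) (e : rel T) a b (X : {set T})
    (c1 : T -> 'I_a) (c2 : T -> nat) :
  (forall x, x \in X -> c2 x < b) ->
  {in ~: X &, forall x y, e x y -> c1 x != c1 y} ->
  {in X &, forall x y, within2 e x y -> c2 x != c2 y} ->
  ab_colorable e a b.
Proof.
move=> c2_lt c1_ok c2_ok.
pose c x : 'I_(a + b) :=
  if x \in X then insubd (lshift b (c1 x)) (a + c2 x) else lshift b (c1 x).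
have cE x : val (c x) = if x \in X then a + c2 x else c1 x.
  by rewrite /c; case: ifP => // xX; rewrite val_insubd ltn_add2l c2_lt.
exists c; split=> i i_a x y; rewrite !inE => /eqP cx /eqP cy.
- have notX z : val (c z) = i -> z \notin X.
    by rewrite cE; case: ifP => // _ ci; move: i_a; rewrite -ci ltnNge leq_addr.
  have [xX yX] := (notX x (congr1 val cx), notX y (congr1 val cy)).
  have c1E : c1 x = c1 y.
    by apply: ord_inj; move: (cE x) (cE y); rewrite (negbTE xX) (negbTE yX) cx cy => <-.
  apply/negP => exy; have := c1_ok x y; rewrite !inE xX yX => /(_ isT isT exy).
  by rewrite c1E eqxx.
- move=> xy; have inX z : val (c z) = i -> z \in X.
    by rewrite cE; case: ifP => // _ ci; move: i_a; rewrite -ci leqNgt ltn_ord.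
  have [xX yX] := (inX x (congr1 val cx), inX y (congr1 val cy)).
  have c2E : c2 x = c2 y.
    by apply/eqP; rewrite -(eqn_add2l a); move: (cE x) (cE y); rewrite xX yX cx cy => <- <-.
  have : ~~ within2 e x y.
    by apply/negP => /(c2_ok x y xX yX); rewrite c2E eqxx.
  by rewrite /within2 xy /= negb_or => /andP[-> /existsPn far].
Qed.

Lemma ab_colorable_card_le (T : finType) (e : rel T) a b :
  #|T| <= b -> ab_colorable e a b.
Proof.
move=> Tb; exists (fun x => rshift a (widen_ord Tb (enum_rank x))); split.
  by move=> i i_a x y; rewrite inE => /eqP cx; move: i_a; rewrite -cx /= ltnNge leq_addr.
move=> i _ x y; rewrite !inE => /eqP cx /eqP cy; rewrite -cy in cx.
move/(congr1 val)/eqP: cx; rewrite /= eqn_add2l => /eqP/val_inj/enum_rank_inj ->.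
by rewrite eqxx.
Qed.

Lemma within2_sym (T : finType) (e : rel T) : symmetric e -> symmetric (within2 e).
Proof.
move=> e_sym x y; rewrite /within2 eq_sym e_sym; congr (_ && (_ || _)).
by apply/existsP/existsP => -[z /andP[? ?]]; exists z; apply/andP; split; rewrite e_sym.
Qed.

Section HeavyVertices.

Variables (T : finType) (e : rel T) (r : T -> nat) (k t : nat).
Hypotheses (e_sym : symmetric e) (e_irr : irreflexive e) (r_inj : injective r).
Hypothesis out_deg : forall v, #|out_nbrs e r v| <= k.

Local Notation out := (out_nbrs e r).
Local Notation inn := (in_nbrs e r).

Definition heavy : {set T} := [set v | t <= #|inn v|].

Definition two_indep_part : {set T} := heavy :|: [set v | [disjoint out v & heavy]].

Definition reach2 (v : T) : {set T} :=
  out v :|: \bigcup_(z in out v) (out z :|: inn z) :|: \bigcup_(z in inn v) out z.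

Lemma heavy_card : t * #|heavy| <= k * #|T|.
Proof.
apply: (@leq_trans (\sum_(v in heavy) #|inn v|)).
  by rewrite mulnC -sum_nat_const; apply: leq_sum => v; rewrite inE.
apply: (@leq_trans (\sum_v #|inn v|)).
  by rewrite [X in _ <= X](bigID (mem heavy)) leq_addr.
rewrite (sum_card_rel_sym (fun u v => e u v && (r u < r v))).
apply: (@leq_trans (\sum_(v : T) k)); last by rewrite sum_nat_const mulnC.
by apply: leq_sum => v _; apply: out_deg.
Qed.

Lemma rank_ltn (u v : T) : r v <= r u -> u != v -> r v < r u.
Proof. by move=> vu uv; rewrite ltn_neqAle vu (inj_eq r_inj) eq_sym uv. Qed.

(* The least vertex of [S] has all its [S]-neighbours among its later neighbours,
   one of which is heavy and so outside [S]. *)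
Lemma outside_degenerate (S : {set T}) :
  S \subset ~: two_indep_part -> S != set0 ->
  exists2 v, v \in S & #|[set u in S | e v u || e u v]| <= k.-1.
Proof.
move=> sS S_n0; have [v vS v_min] := ex_min_rank r S_n0; exists v => //.
have notX u : u \in S -> u \notin two_indep_part by move/(subsetP sS); rewrite inE.
have : ~~ [disjoint out v & heavy].
  by have := notX v vS; rewrite !inE negb_or => /andP[_].
rewrite -setI_eq0 => /set0Pn[h]; rewrite inE => /andP[h_out h_heavy].
apply: (@leq_trans #|out v :\ h|).
  apply: subset_leq_card; apply/subsetP => u; rewrite inE => /andP[uS vu].
  have e_vu : e v u by case/orP: vu => //; rewrite e_sym.
  have uv : u != v by apply: contraTneq e_vu => ->; rewrite e_irr.
  have uh : u != h by apply: contraNneq (notX u uS) => ->; rewrite inE h_heavy.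
  by rewrite !inE uh e_vu rank_ltn ?v_min.
have := cardsD1 h (out v); have := out_deg v; rewrite h_out; lia.
Qed.

Lemma within2_reach2 (u v : T) : within2 e v u -> r v < r u -> u \in reach2 v.
Proof.
case/andP=> _ /orP[e_vu | /existsP[z /andP[e_vz e_zu]]] vu; rewrite !in_setU.
  by rewrite inE e_vu vu.
have zv : z != v by apply: contraTneq e_vz => ->; rewrite e_irr.
have zu : z != u by apply: contraTneq e_zu => ->; rewrite e_irr.
case: (ltngtP (r v) (r z)) => [vz | zv' | /r_inj vz]; last by rewrite vz eqxx in zv.
  apply/orP; left; apply/orP; right; apply/bigcupP; exists z; first by rewrite inE e_vz.
  case: (ltngtP (r z) (r u)) => [zu' | uz | /r_inj]; last by move/eqP; rewrite (negbTE zu).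
    by rewrite !inE e_zu zu'.
  by rewrite !inE (e_sym u z) e_zu uz orbT.
apply/orP; right; apply/bigcupP; exists z; first by rewrite inE (e_sym z v) e_vz.
by rewrite inE e_zu (ltn_trans zv' vu).
Qed.

Lemma card_reach2 (v : T) : v \notin heavy -> [disjoint out v & heavy] ->
  #|reach2 v| <= k + k * (k + t) + t * k.
Proof.
rewrite inE -ltnNge => /ltnW in_v out_light.
have light z : z \in out v -> #|out z :|: inn z| <= k + t.
  move=> zv; apply: leq_trans (leq_card_setU _ _) (leq_add (out_deg z) _).
  by have /negbT := disjointFr out_light zv; rewrite inE -ltnNge => /ltnW.
apply: leq_trans (leq_card_setU _ _) (leq_add _ _).
  apply: leq_trans (leq_card_setU _ _) (leq_add (out_deg v) _).
  apply: leq_trans (card_bigcup_le _ _) _.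
  apply: (@leq_trans (\sum_(z in out v) (k + t))); first exact: leq_sum.
  by rewrite sum_nat_const leq_mul2r out_deg orbT.
apply: leq_trans (card_bigcup_le _ _) _.
apply: (@leq_trans (\sum_(z in inn v) k)); first by apply: leq_sum => z _; apply: out_deg.
by rewrite sum_nat_const leq_mul2r in_v orbT.
Qed.

Lemma inside_square_degenerate (S : {set T}) :
  S \subset two_indep_part -> S != set0 ->
  exists2 v, v \in S &
    #|[set u in S | within2 e v u || within2 e u v]| <= #|heavy| + (k + k * (k + t) + t * k).
Proof.
move=> sS S_n0; have [/eqP S_heavy | ] := boolP (S :\: heavy == set0).
  have [v vS] := set0Pn _ S_n0; exists v => //.
  apply: leq_trans (leq_addr _ _); apply: subset_leq_card; apply/subsetP => u.
  rewrite inE => /andP[uS _]; apply: contraT => uH.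
  have : u \in S :\: heavy by rewrite inE uH.
  by rewrite S_heavy inE.
case/(ex_min_rank r) => v /setDP[vS v_light] v_min; exists v => //.
have out_light : [disjoint out v & heavy].
  by have := subsetP sS v vS; rewrite in_setU (negbTE v_light) inE.
apply: (@leq_trans #|heavy :|: reach2 v|); last first.
  exact: leq_trans (leq_card_setU _ _) (leq_add (leqnn _) (card_reach2 v_light out_light)).
apply: subset_leq_card; apply/subsetP => u; rewrite inE => /andP[uS vu].
have {}vu : within2 e v u by case/orP: vu => //; rewrite within2_sym.
rewrite in_setU; case: (boolP (u \in heavy)) => //= u_light.
apply: within2_reach2 => //; apply: rank_ltn; first by rewrite v_min // inE u_light.
by apply: contraTneq vu => ->; rewrite within2_irr.
Qed.

End HeavyVertices.

Lemma sqrt_bound_nat k n b :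
  (4 * INR k * sqrt (INR k + 1) * sqrt (INR n) <= INR b)%R ->
  16 * k * k * (k + 1) * n <= b * b.
Proof.
move=> kn_b.
have k_ge0 := pos_INR k.
have sqrt_k := sqrt_sqrt (INR k + 1) ltac:(lra).
have sqrt_n := sqrt_sqrt (INR n) (pos_INR n).
have sqrt_k_ge0 := sqrt_pos (INR k + 1).
have sqrt_n_ge0 := sqrt_pos (INR n).
have lhs_ge0 : (0 <= 4 * INR k * sqrt (INR k + 1) * sqrt (INR n))%R.
  by repeat apply: Rmult_le_pos; lra.
have sq := Rmult_le_compat _ _ _ _ lhs_ge0 lhs_ge0 kn_b kn_b.
have : (INR (16 * k * k * (k + 1) * n)%coq_nat <= INR (b * b)%coq_nat)%R.
  rewrite !mult_INR plus_INR.
  replace (INR 16) with 16%R by (simpl; ring).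
  replace (INR 1) with 1%R by (simpl; ring).
  nra.
move/INR_le; lia.
Qed.

Lemma square_budget k n b t h : 1 <= k -> t * t <= n < t.+1 * t.+1 -> b < n ->
  16 * k * k * (k + 1) * n <= b * b -> t * h <= k * n ->
  h + (k + k * (k + t) + t * k) < b.
Proof.
move=> k_gt0 /andP[tn nt] bn b_sq th.
have b_gt0 : 0 < b by nia.
have b_big : 16 * k * k * (k + 1) < b.
  have : b * b < n * b by rewrite ltn_pmul2r.
  nia.
have t_big : 5 * k <= t by nia.
have tb : 5 * k * t <= b by nia.
have t_gt0 : 0 < t by lia.
rewrite -(ltn_pmul2l t_gt0); nia.
Qed.

Theorem mainTheorem12 (k : nat) (T : finType) (e : rel T) (b : nat) :
  1 <= k ->
  simple_graph e ->
  degenerate e k ->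
  (4 * INR k * sqrt (INR k + 1) * sqrt (INR #|T|) <= INR b)%R ->
  ab_colorable e k b.
Proof.
case: k => [//|k] _ [e_sym e_irr] /degeneracy_order[r [r_inj out_deg]] /sqrt_bound_nat b_sq.
have [Tb | bT] := leqP #|T| b; first exact: ab_colorable_card_le.
set t := Nat.sqrt #|T|.
have t_sq : t * t <= #|T| < t.+1 * t.+1 by have := Nat.sqrt_spec #|T|; lia.
have [c1 c1_ok] :=
  degenerate_coloring e_irr (outside_degenerate e_sym e_irr r_inj out_deg (t := t)).
have [c2 c2_ok] := degenerate_coloring (@within2_irr T e)
  (inside_square_degenerate e_sym e_irr r_inj out_deg (t := t)).
apply: (ab_colorable_split _ c1_ok c2_ok) => x _.
apply: leq_trans (ltn_ord (c2 x)) _.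
exact: square_budget (ltn0Sn k) t_sq bT b_sq (heavy_card t out_deg).
Qed.
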